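(* Let $L$ be a finite extension of $\mathbb{Z}_\mathrm{max}$. Then $L\cong F^{(n)}$ as extensions of $\mathbb{Z}_\mathrm{max}$ for some positive integer $n$.
   Context: A (commutative) semiring is a set with two binary operations, addition and multiplication, each making it a commutative monoid (with identities $0$ and $1$), such that multiplication distributes over addition. A semifield is a semiring in which every nonzero element is a multiplicative unit. $\mathbb{Z}_\mathrm{max}=\mathbb{Z}\cup\{-\infty\}$ is the semifield whose addition is $\max$ and whose multiplication is ordinary addition of integers (so its zero is $-\infty$ and its one is the integer $0$). Writing $u$ for the integer $1$ viewed in $\mathbb{Z}_\mathrm{max}$, we have $\mathbb{Z}_\mathrm{max}=\{0\}\cup\{u^k: k\in\mathbb{Z}\}$ with $u^a+u^b=u^{\max(a,b)}$. An extension of a semifield $K$ is a semifield $L$ together with an injective semiring homomorphism $K\to L$; it is finite if this homomorphism makes $L$ a finitely generated $K$-semimodule. For a positive integer $n$, $F^{(n)}$ denotes the extension of $\mathbb{Z}_\mathrm{max}$ given by $L=\mathbb{Z}_\mathrm{max}$ and the injective homomorphism $\mathbb{Z}_\mathrm{max}\to\mathbb{Z}_\mathrm{max}$, $u^k\mapsto u^{nk}$, $0\mapsto 0$. An isomorphism of extensions of $K$ is a semiring isomorphism compatible with the embeddings of $K$. *)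

From HB Require Import structures.
From mathcomp Require Import all_boot all_order all_algebra.
Set Implicit Arguments. Unset Strict Implicit. Unset Printing Implicit Defensive.
Import Order.TTheory GRing.Theory Num.Theory.
Local Open Scope ring_scope.

(* The semifield Z_max = Z ∪ {-oo}: zmax_ninf is -oo (the zero),
   zmax_fin k is u^k (so zmax_fin 0 is the one). *)
Inductive zmax := zmax_ninf | zmax_fin of int.

Definition zmax_to (x : zmax) : option int :=
  if x is zmax_fin k then Some k else None.
Definition zmax_of (o : option int) : zmax :=
  if o is Some k then zmax_fin k else zmax_ninf.
Lemma zmax_toK : cancel zmax_to zmax_of. Proof. by case. Qed.
HB.instance Definition _ := Countable.copy zmax (can_type zmax_toK).

Definition zmax_add (x y : zmax) : zmax :=
  match x, y with
  | zmax_ninf, _ => y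
  | _, zmax_ninf => x
  | zmax_fin a, zmax_fin b => zmax_fin (Num.max a b)
  end.
Definition zmax_mul (x y : zmax) : zmax :=
  match x, y with
  | zmax_fin a, zmax_fin b => zmax_fin (a + b)
  | _, _ => zmax_ninf
  end.

Lemma zmax_addA : associative zmax_add.
Proof. by case=> [|a] [|b] [|c] //=; rewrite maxA. Qed.
Lemma zmax_addC : commutative zmax_add.
Proof. by case=> [|a] [|b] //=; rewrite maxC. Qed.
Lemma zmax_add0 : left_id zmax_ninf zmax_add.
Proof. by case. Qed.

HB.instance Definition _ := GRing.isNmodule.Build zmax zmax_addA zmax_addC zmax_add0.

Lemma zmax_mulA : associative zmax_mul.
Proof. by case=> [|a] [|b] [|c] //=; rewrite addrA. Qed.
Lemma zmax_mulC : commutative zmax_mul.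
Proof. by case=> [|a] [|b] //=; rewrite addrC. Qed.
Lemma zmax_mul1 : left_id (zmax_fin 0) zmax_mul.
Proof. by case=> [|a] //=; rewrite add0r. Qed.
Lemma zmax_mulDl : left_distributive zmax_mul (@GRing.add zmax).
Proof.
case=> [|a] [|b] [|c] //=; congr zmax_fin.
by rewrite real_addr_maxl ?num_real.
Qed.
Lemma zmax_mul0 : left_zero zmax_ninf zmax_mul.
Proof. by []. Qed.
Lemma zmax_one_neq0 : zmax_fin 0 != zmax_ninf.
Proof. by []. Qed.

HB.instance Definition _ := GRing.Nmodule_isComNzSemiRing.Build zmax
  zmax_mulA zmax_mulC zmax_mul1 zmax_mulDl zmax_mul0 zmax_one_neq0.

Definition zmax_u : zmax := zmax_fin 1.

(* The embedding Z_max -> Z_max of F^(n): u^k |-> u^(n k), 0 |-> 0. *)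
Definition frob_zmax (n : nat) (x : zmax) : zmax :=
  if x is zmax_fin k then zmax_fin (n%:Z * k) else zmax_ninf.

Definition is_semifield (L : comNzSemiRingType) : Prop :=
  forall x : L, x <> 0 -> exists y : L, x * y = 1.

Definition fin_gen_semimodule (K L : comNzSemiRingType) (f : K -> L) : Prop :=
  exists s : seq L, forall x : L,
    exists c : 'I_(size s) -> K, x = \sum_(i < size s) f (c i) * s`_i.

From HB Require Import structures.
From mathcomp Require Import all_boot all_order all_algebra zify ring.

(* Since 1 = f(u^0 + u^0) = 1 + 1, the semifield L is additively idempotent,
   so x ⪯ y :<-> x + y = y is a partial order compatible with multiplication, along
   which f is an order embedding.  Finite generation puts every nonzero element
   within a fixed distance c of some u^k and makes every interval [1, u^D]
   finite; a finite interval cannot contain all powers of an element p ≻ 1.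
   Applied to p = x + 1, this shows that the order is total.  The least element
   b of (1, u] then generates: every element of [1, u] is a power of b, so
   b^n = u for some n > 0, every nonzero element is u^k b^j, and
   u^k |-> b^k is the required isomorphism from F^(n). *)

Import Order.TTheory GRing.Theory Num.Theory.
Local Open Scope ring_scope.
Set Implicit Arguments.
Unset Strict Implicit.

Definition natle (V : nmodType) (x y : V) : bool := x + y == y.
Notation "x ⪯ y" := (natle x y) (at level 70, no associativity).

Section NaturalOrder.
Variable V : nmodType.
Implicit Types x y z : V.

Lemma natleP x y : reflect (x + y = y) (x ⪯ y).
Proof. exact: eqP. Qed.

Lemma natle_trans : transitive (@natle V).
Proof. by move=> y x z /natleP xy /natleP yz; apply/natleP; rewrite -yz addrA xy. Qed.

Lemma natle_anti x y : x ⪯ y -> y ⪯ x -> x = y.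
Proof. by move=> /natleP xy /natleP yx; rewrite -yx addrC xy. Qed.

Lemma natle0x x : 0 ⪯ x.
Proof. by apply/natleP; rewrite add0r. Qed.

Lemma natlex0 x : x ⪯ 0 -> x = 0.
Proof. by move/natleP; rewrite addr0. Qed.

Lemma natleD x y x' y' : x ⪯ y -> x' ⪯ y' -> x + x' ⪯ y + y'.
Proof. by move=> /natleP xy /natleP xy'; apply/natleP; rewrite addrACA xy xy'. Qed.

Lemma natle_join x y z : x ⪯ z -> y ⪯ z -> x + y ⪯ z.
Proof. by move=> /natleP xz /natleP yz; apply/natleP; rewrite -addrA yz xz. Qed.

Lemma natle_sum (I : Type) (r : seq I) (F G : I -> V) :
  (forall i, F i ⪯ G i) -> \sum_(i <- r) F i ⪯ \sum_(i <- r) G i.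
Proof.
move=> FG; elim: r => [|i r IHr]; first by rewrite !big_nil natle0x.
by rewrite !big_cons natleD.
Qed.

Hypothesis addxx : forall x : V, x + x = x.

Lemma natle_refl : reflexive (@natle V).
Proof. by move=> x; apply/natleP. Qed.

Lemma natle_addl x y : x ⪯ x + y.
Proof. by apply/natleP; rewrite addrA addxx. Qed.

Lemma natle_addr x y : y ⪯ x + y.
Proof. by rewrite addrC natle_addl. Qed.

End NaturalOrder.

Section MultiplicativeOrder.
Variable R : comNzSemiRingType.
Implicit Types x y z : R.

Lemma natleM2l z x y : x ⪯ y -> z * x ⪯ z * y.
Proof. by move=> /natleP xy; apply/natleP; rewrite -mulrDr xy. Qed.

Lemma natleM2r z x y : x ⪯ y -> x * z ⪯ y * z.
Proof. by rewrite ![_ * z]mulrC; apply: natleM2l. Qed.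

Lemma natleM x y x' y' : x ⪯ y -> x' ⪯ y' -> x * x' ⪯ y * y'.
Proof. by move=> xy xy'; apply: natle_trans (natleM2l x xy') (natleM2r y' xy). Qed.

Lemma natle_neq0 x : 1 ⪯ x -> x != 0.
Proof. by apply: contraTneq => ->; apply/negP => /natlex0/eqP; rewrite oner_eq0. Qed.

Hypothesis addxx : forall x : R, x + x = x.

Lemma natle1_expr x m : 1 ⪯ x -> 1 ⪯ x ^+ m.
Proof.
move=> x_ge1; elim: m => [|m IHm]; first by rewrite expr0 natle_refl.
by rewrite exprS -(mulr1 1) natleM.
Qed.

Lemma natle_exprS x m : 1 ⪯ x -> x ⪯ x ^+ m.+1.
Proof. by move=> x_ge1; rewrite exprS -{1}[x]mulr1 natleM2l ?natle1_expr. Qed.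

End MultiplicativeOrder.

Section Semifield.
Variable R : comNzSemiRingType.
Hypothesis R_sf : is_semifield R.
Implicit Types x y z : R.

Lemma sf_inv x : x != 0 -> exists y, x * y = 1.
Proof. by move/eqP; apply: R_sf. Qed.

Lemma sf_mulIf z x y : z != 0 -> x * z = y * z -> x = y.
Proof.
move=> /sf_inv[w zw] xz_yz.
by rewrite -[x]mulr1 -[y]mulr1 -zw !mulrA xz_yz.
Qed.

Lemma sf_mulf_neq0 x y : x != 0 -> y != 0 -> x * y != 0.
Proof.
move=> /sf_inv[x' xx'] /sf_inv[y' yy']; apply/eqP => xy0.
have : x * y * (x' * y') = 1 by rewrite mulrACA xx' yy' mulr1.
by rewrite xy0 mul0r => /esym/eqP; rewrite oner_eq0.
Qed.

Lemma sf_expf_neq0 x m : x != 0 -> x ^+ m != 0.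
Proof.
move=> x0; elim: m => [|m IHm]; first by rewrite expr0 oner_eq0.
by rewrite exprS sf_mulf_neq0.
Qed.

Lemma sf_natleM2r z x y : z != 0 -> x * z ⪯ y * z -> x ⪯ y.
Proof. by move=> z0 /natleP; rewrite -mulrDl => /(sf_mulIf z0) /natleP. Qed.

Lemma sf_natle_total : (forall x, x != 0 -> (1 ⪯ x) || (x ⪯ 1)) -> total (@natle R).
Proof.
move=> cmp1 x y; have [->|y0] := eqVneq y 0; first by rewrite natle0x orbT.
have [->|x0] := eqVneq x 0; first by rewrite natle0x.
have [w yw] := sf_inv y0; have w0 : w != 0.
  by apply/eqP=> w0; move/eqP: yw; rewrite w0 mulr0 eq_sym oner_eq0.
apply/orP; have /orP[xw_ge1 | xw_le1] := cmp1 _ (sf_mulf_neq0 x0 w0); [right | left].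
  by have := natleM2l y xw_ge1; rewrite mulr1 mulrCA yw mulr1.
by have := natleM2l y xw_le1; rewrite mulr1 mulrCA yw mulr1.
Qed.

Hypothesis addxx : forall x : R, x + x = x.

(* Pigeonhole: two of the powers p^0, ..., p^(size C) coincide, so some
   positive power of p is 1, and p lies below it. *)
Lemma sf_expr_bounded_eq1 (p : R) (C : seq R) :
  1 ⪯ p -> (forall N, (N <= size C)%N -> p ^+ N \in C) -> p = 1.
Proof.
move=> p_ge1 pC.
have [i [j [lt_ij lt_j pij]]] : exists i j, [/\ (i < j)%N, (j <= size C)%N & p ^+ i = p ^+ j].
  pose pows := [seq p ^+ N | N <- iota 0 (size C).+1].
  have sub : {subset pows <= C}.
    by move=> x /mapP[N]; rewrite mem_iota => /andP[_ ltN] ->; apply: pC.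
  have : ~~ uniq pows.
    by apply/negP => /uniq_leq_size /(_ sub); rewrite size_map size_iota ltnn.
  case/(uniqPn 0) => i [j []]; rewrite size_map size_iota => lt_ij lt_j.
  by rewrite !(nth_map 0%N) ?size_iota ?nth_iota ?(ltn_trans lt_ij) // !add0n; exists i, j.
have pji : p ^+ (j - i) = 1.
  apply: (sf_mulIf (sf_expf_neq0 i (natle_neq0 p_ge1))).
  by rewrite mul1r -exprD subnK // ltnW.
have ji_gt0 : (0 < j - i)%N by rewrite subn_gt0.
by apply: (natle_anti _ p_ge1); rewrite -pji -(prednK ji_gt0) natle_exprS.
Qed.

Lemma mul_eq_add_expr (p q : R) : 1 ⪯ p -> 1 ⪯ q -> p * q = p + q ->
  forall N M : nat, p ^+ N * q ^+ M = p ^+ N + q ^+ M.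
Proof.
move=> p_ge1 q_ge1 pq N.
have pNq : p ^+ N * q = p ^+ N + q.
  elim: N => [|N IHN]; first by rewrite expr0 mul1r; apply/esym/natleP.
  rewrite exprS -mulrA IHN mulrDr pq addrA -exprS.
  by have /natleP pp := natle_exprS addxx N p_ge1; rewrite [p ^+ _ + p]addrC pp.
elim=> [|M IHM].
  by rewrite expr0 mulr1 addrC; apply/esym/natleP; apply: natle1_expr.
rewrite exprSr mulrA IHM mulrDl pNq -exprSr -addrA.
by have /natleP -> := natle_exprS addxx M q_ge1.
Qed.

Lemma expr_addr1 x N : x != 0 -> (x + 1) ^+ N = x ^+ N + 1.
Proof.
move=> /sf_inv[w xw].
have q_ge1 : 1 ⪯ w + 1 by apply: natle_addr.
have xq : x * (w + 1) = x + 1 by rewrite mulrDr xw mulr1 addrC.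
have pq : (x + 1) * (w + 1) = (x + 1) + (w + 1).
  by rewrite mulrDl mul1r xq.
apply: (sf_mulIf (sf_expf_neq0 N (natle_neq0 q_ge1))).
by rewrite mul_eq_add_expr ?(natle_addr addxx) // mulrDl -exprMn xq mul1r.
Qed.

Lemma sf_expr_ge1 x N : x != 0 -> 1 ⪯ x ^+ N.+1 -> 1 ⪯ x.
Proof.
move=> x0 xN_ge1; have [w xw] := sf_inv x0.
have w0 : w != 0 by apply/eqP=> w0; move/eqP: xw; rewrite w0 mulr0 eq_sym oner_eq0.
have wN_le1 : w ^+ N.+1 ⪯ 1.
  by have := natleM2l (w ^+ N.+1) xN_ge1; rewrite mulr1 -exprMn mulrC xw expr1n.
have q1 : (w + 1) ^+ N.+1 = 1 by rewrite expr_addr1 //; apply/natleP.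
have w_le1 : w ⪯ 1.
  apply: natle_trans (natle_addl addxx w 1) _.
  by rewrite -[X in _ ⪯ X]q1 natle_exprS // natle_addr.
by have := natleM2l x w_le1; rewrite xw mulr1.
Qed.

End Semifield.

Lemma uniform_bound (I : finType) (P : I -> nat -> Prop) :
  (forall i a b, (a <= b)%N -> P i a -> P i b) ->
  (forall i, exists a, P i a) -> exists c, forall i, P i c.
Proof.
move=> P_mono P_ex.
suff [c Pc] : exists c, forall i, i \in enum I -> P i c.
  by exists c => i; apply: Pc; rewrite mem_enum.
elim: (enum I) => [|i r [c Pc]]; first by exists 0%N.
have [a Pa] := P_ex i; exists (maxn a c) => j; rewrite in_cons => /predU1P[->|jr].
  by apply: P_mono Pa; rewrite leq_maxl.
by apply: P_mono (Pc j jr); rewrite leq_maxr.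
Qed.

Lemma boundary_exists (P : pred nat) N : P 0%N -> ~~ P N -> exists j, P j /\ ~~ P j.+1.
Proof.
move=> P0; elim: N => [|N IHN]; first by rewrite P0.
by case PN : (P N) => notPN; [exists N; rewrite PN | apply: IHN; rewrite PN].
Qed.

Section FiniteExtension.
Variables (L : comNzSemiRingType) (f : {rmorphism zmax -> L}).
Hypotheses (L_sf : is_semifield L) (f_inj : injective f).

Definition upow (k : int) : L := f (zmax_fin k).

Lemma upowD j k : upow j * upow k = upow (j + k).
Proof. by rewrite /upow -rmorphM. Qed.

Lemma upow_max j k : upow j + upow k = upow (Num.max j k).
Proof. by rewrite /upow -raddfD. Qed.

Lemma upow0 : upow 0 = 1.
Proof. exact: rmorph1. Qed.

Lemma L_addxx (x : L) : x + x = x.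
Proof. by rewrite -[x]mulr1 -mulrDr -upow0 upow_max maxxx. Qed.

Lemma natle_upow j k : (upow j ⪯ upow k) = (j <= k).
Proof.
rewrite /natle upow_max; apply/eqP/idP => [/f_inj[<-]|jk].
  by rewrite le_max lexx.
by rewrite (max_idPr jk).
Qed.

Lemma natle_f_upow (z : zmax) : exists K : nat, f z ⪯ upow K.
Proof.
case: z => [|k]; first by exists 0%N; rewrite raddf0 natle0x.
by exists `|k|%N; rewrite -/(upow k) natle_upow; lia.
Qed.

Variable s : seq L.
Hypothesis s_gen : forall x : L,
  exists c : 'I_(size s) -> zmax, x = \sum_(i < size s) f (c i) * s`_i.

Lemma upow_ub (y : L) : exists K : nat, y ⪯ upow K.
Proof.
pose g := \sum_(i < size s) s`_i.
have le_upow_g (x : L) : exists K : nat, x ⪯ upow K * g.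
  have [c ->] := s_gen x.
  have [K cK] : exists K : nat, forall i, f (c i) ⪯ upow K.
    apply: uniform_bound => [i a b ab /natle_trans|i]; last exact: natle_f_upow.
    by apply; rewrite natle_upow lez_nat.
  exists K; rewrite /g mulr_sumr; apply: natle_sum => i.
  by rewrite ![_ * s`_i]mulrC natleM2l.
have g0 : g != 0.
  have [K] := le_upow_g 1; apply: contraTneq => ->.
  by rewrite mulr0; apply/negP => /natlex0/eqP; rewrite oner_eq0.
have [K' gK'] := le_upow_g (g * g); have g_le : g ⪯ upow K' by apply: sf_natleM2r gK'.
have [K yK] := le_upow_g y; exists (K + K')%N.
by apply: natle_trans yK _; rewrite PoszD -upowD natleM2l.
Qed.

Lemma upow_lb (y : L) : y != 0 -> exists K : int, upow K ⪯ y.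
Proof.
move=> /(sf_inv L_sf)[w yw]; have [K wK] := upow_ub w; exists (- K%:Z).
have := natleM2l (y * upow (- K%:Z)) wK.
by rewrite mulrAC yw mul1r -mulrA upowD addNr upow0 mulr1.
Qed.

Definition within (c : nat) (k : int) (y : L) : bool :=
  (upow (k - c%:Z) ⪯ y) && (y ⪯ upow (k + c%:Z)).

Lemma within_widen c c' k y : (c <= c')%N -> within c k y -> within c' k y.
Proof.
move=> cc' /andP[lo hi]; apply/andP; split.
  by apply: natle_trans lo; rewrite natle_upow; lia.
by apply: natle_trans hi _; rewrite natle_upow; lia.
Qed.

Lemma within_upowM c j k y : within c j y -> within c (k + j) (upow k * y).
Proof.
move=> /andP[lo hi]; rewrite /within -!addrA -(upowD k (j - _)) -(upowD k (j + _)).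
by rewrite !natleM2l.
Qed.

Lemma within_add c k k' x y :
  within c k x -> within c k' y -> within c (Num.max k k') (x + y).
Proof.
move=> /andP[xlo xhi] /andP[ylo yhi]; apply/andP; split.
  have [kk'|k'k] := lerP k k'.
    by apply: natle_trans ylo (natle_addr L_addxx _ _); rewrite natle_upow; lia.
  by apply: natle_trans xlo (natle_addl L_addxx _ _); rewrite natle_upow; lia.
apply: natle_trans (natleD xhi yhi) _.
by rewrite upow_max natle_upow; lia.
Qed.

Lemma exists_within_gen :
  exists c : nat, forall i : 'I_(size s), s`_i != 0 -> within c 0 s`_i.
Proof.
apply: uniform_bound => [i a b ab Pa si0|i]; first exact: within_widen ab (Pa si0).
have [si0|si0] := eqVneq s`_i 0; first by exists 0%N; rewrite /= si0.
have [K hi] := upow_ub s`_i; have [j lo] := upow_lb si0.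
exists (`|j|%N + K)%N => _; apply/andP; split.
  by apply: natle_trans lo; rewrite natle_upow; lia.
by apply: natle_trans hi _; rewrite natle_upow; lia.
Qed.

Variable c : nat.
Hypothesis s_within : forall i : 'I_(size s), s`_i != 0 -> within c 0 s`_i.

Lemma exists_within y : y != 0 -> exists k, within c k y.
Proof.
move=> y0; have [a ya] := s_gen y.
suff : forall r : seq 'I_(size s), \sum_(i <- r) f (a i) * s`_i = 0 \/
    exists k, within c k (\sum_(i <- r) f (a i) * s`_i).
  by move/(_ (index_enum _)); rewrite -ya => -[y_eq0|//]; rewrite y_eq0 eqxx in y0.
elim=> [|i r IHr]; first by left; rewrite big_nil.
have term : f (a i) * s`_i = 0 \/ exists k, within c k (f (a i) * s`_i).
  case: (a i) => [|k]; first by left; rewrite raddf0 mul0r.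
  have [->|si0] := eqVneq s`_i 0; first by left; rewrite mulr0.
  by right; exists (k + 0); apply: within_upowM; apply: s_within.
rewrite big_cons; case: term => [->|[k hk]]; first by rewrite add0r.
case: IHr => [->|[k' hk']]; first by rewrite addr0; right; exists k.
by right; exists (Num.max k k'); apply: within_add.
Qed.

(* A term below u^D either is absorbed by 1 or has its exponent pinned to a
   window of length D + 2c by the bounds on s`_i. *)
Lemma one_add_term_mem (D : nat) (i : 'I_(size s)) (z : zmax) : f z * s`_i ⪯ upow D ->
  1 + f z * s`_i \in
    1 :: [seq 1 + upow (j%:Z - c%:Z) * s`_i | j <- iota 0 (D + c + c).+1].
Proof.
rewrite in_cons; case: z => [|k] le_D; first by rewrite raddf0 mul0r addr0 eqxx.
have [->|si0] := eqVneq s`_i 0; first by rewrite mulr0 addr0 eqxx.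
have /andP[lo hi] := s_within si0.
rewrite -/(upow k) in le_D *.
have [k_le|k_gt] := lerP k (- c%:Z).
  rewrite addrC; suff /natleP -> : upow k * s`_i ⪯ 1 by rewrite eqxx.
  by apply: natle_trans (natleM2l _ hi) _; rewrite upowD -upow0 natle_upow; lia.
have : k - c%:Z <= D%:Z.
  rewrite -natle_upow; apply: natle_trans le_D.
  by have := natleM2l (upow k) lo; rewrite upowD add0r.
move=> kc_le; apply/orP; right; apply/mapP; exists (absz (k + c%:Z)).
  by rewrite mem_iota; lia.
by rewrite /upow; congr (1 + f (zmax_fin _) * _); lia.
Qed.

Lemma interval_finite (D : nat) :
  exists C : seq L, forall y, 1 ⪯ y -> y ⪯ upow D -> y \in C.
Proof.
suff /(_ (index_enum _))[C HC] : forall r : seq 'I_(size s), exists C : seq L,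
    forall a : 'I_(size s) -> zmax, \sum_(i <- r) f (a i) * s`_i ⪯ upow D ->
    1 + \sum_(i <- r) f (a i) * s`_i \in C.
  exists C => y y_ge1 le_D; have [a ya] := s_gen y.
  by move: y_ge1 le_D; rewrite ya => /natleP {2}<- /HC.
elim=> [|i r [C HC]]; first by exists [:: 1] => a _; rewrite big_nil addr0 mem_head.
exists [seq x + z | x <- 1 :: [seq 1 + upow (j%:Z - c%:Z) * s`_i
                                  | j <- iota 0 (D + c + c).+1], z <- C].
move=> a; rewrite big_cons -{1}(L_addxx 1) addrACA => le_D.
apply: allpairs_f; [apply: one_add_term_mem | apply: HC];
  apply: natle_trans _ le_D; [exact: (natle_addl L_addxx) | exact: (natle_addr L_addxx)].
Qed.

(* If 1 ⪯ x fails, so does 1 ⪯ x^N for N > 0; hence x^N, being within c of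
   some u^k, lies below u^(2c), and so do all powers (x + 1)^N = x^N + 1. *)
Lemma natle_cmp1 (x : L) : x != 0 -> (1 ⪯ x) || (x ⪯ 1).
Proof.
move=> x0; case x_ge1 : (1 ⪯ x) => //=; apply/natleP.
have [C HC] := interval_finite (c + c).
apply: (sf_expr_bounded_eq1 L_sf L_addxx (C := C) (natle_addr L_addxx x 1)) => N _.
rewrite (expr_addr1 L_sf L_addxx N x0); apply: HC; first exact: (natle_addr L_addxx).
have u2c_ge1 : 1 ⪯ upow (c + c)%N by rewrite -upow0 natle_upow.
apply: (natle_join _ u2c_ge1); case: N => [|N]; first by rewrite expr0.
have [k /andP[lo hi]] := exists_within (sf_expf_neq0 L_sf N.+1 x0).
apply: natle_trans hi _; rewrite natle_upow.
have [kc_lt|kc_ge] := ltrP (k - c%:Z) 0; first by lia.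
suff : 1 ⪯ x by rewrite x_ge1.
by apply: (sf_expr_ge1 L_sf L_addxx x0); apply: natle_trans lo; rewrite -upow0 natle_upow.
Qed.

Lemma natle_total : total (@natle L).
Proof. exact: sf_natle_total L_sf natle_cmp1. Qed.

Lemma upow1_neq1 : upow 1 != 1.
Proof. by rewrite -upow0; apply/eqP => /f_inj[]. Qed.

Lemma exists_least_gt1 : exists b : L, [/\ 1 ⪯ b, b != 1, b ⪯ upow 1 &
  forall z, 1 ⪯ z -> z ⪯ upow 1 -> z != 1 -> b ⪯ z].
Proof.
have [C HC] := interval_finite 1.
pose P z := [&& 1 ⪯ z, z != 1 & z ⪯ upow 1].
have mem_t z : P z -> z \in [seq z <- sort (@natle L) C | P z].
  by move=> Pz; rewrite mem_filter Pz mem_sort; case/and3P: Pz => z_ge1 _; apply: HC.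
have Pu : P (upow 1) by rewrite /P -{1}upow0 natle_upow upow1_neq1 (natle_refl L_addxx).
move: (mem_t _ Pu); case Ht: [seq z <- _ | _] => [//|b t] _.
have sorted_bt : sorted (@natle L) (b :: t).
  by rewrite -Ht sorted_filter ?sort_sorted //; [exact: natle_trans | exact: natle_total].
have : b \in b :: t := mem_head b t.
rewrite -Ht mem_filter => /andP[/and3P[b_ge1 b_neq1 b_le_u] _].
exists b; split => // z z_ge1 z_le_u z_neq1.
have : z \in b :: t by rewrite -Ht mem_t // /P z_ge1 z_neq1.
rewrite in_cons => /predU1P[->|z_in]; first exact: (natle_refl L_addxx).
by move/allP: (order_path_min (@natle_trans L) sorted_bt); apply.
Qed.

Lemma upow1_ge1 : 1 ⪯ upow 1.
Proof. by rewrite -upow0 natle_upow. Qed.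

Lemma upow_interval y : y != 0 -> exists k, upow k ⪯ y /\ y ⪯ upow (k + 1).
Proof.
move=> y0; have [j lo] := upow_lb y0; have [K hi] := upow_ub y.
have [m [m_le m1_gt]] : exists m, upow (j + m%:Z) ⪯ y /\ ~~ (upow (j + m.+1%:Z) ⪯ y).
  apply: (boundary_exists (P := fun m => upow (j + m%:Z) ⪯ y) (N := `|K%:Z - j|.+1)).
    by rewrite addr0.
  by apply/negP => le_y; have := natle_trans le_y hi; rewrite natle_upow; lia.
exists (j + m%:Z); split => //.
have -> : j + m%:Z + 1 = j + m.+1%:Z by lia.
by have /orP[le_y|//] := natle_total (upow (j + m.+1%:Z)) y; rewrite le_y in m1_gt.
Qed.

Variable b : L.
Hypotheses (b_ge1 : 1 ⪯ b) (b_neq1 : b != 1) (b_le_u : b ⪯ upow 1).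
Hypothesis b_least : forall z, 1 ⪯ z -> z ⪯ upow 1 -> z != 1 -> b ⪯ z.

Lemma exists_expr_not_le_u : exists N, ~~ (b ^+ N ⪯ upow 1).
Proof.
have [C HC] := interval_finite 1.
have [all_le|/allPn[N _ N_gt]] :=
  boolP (all (fun N => b ^+ N ⪯ upow 1) (iota 0 (size C).+1)); last by exists N.
suff b1 : b = 1 by move: b_neq1; rewrite b1 eqxx.
apply: (sf_expr_bounded_eq1 L_sf L_addxx (C := C) b_ge1) => N N_le.
apply: HC; first exact: (natle1_expr L_addxx).
by move/allP: all_le; apply; rewrite mem_iota.
Qed.

(* Write b^j ⪯ z ≺ b^(j+1); then z b^-j lies in [1, b], and b is least in (1, u]. *)
Lemma interval_expr z : 1 ⪯ z -> z ⪯ upow 1 -> exists j, z = b ^+ j.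
Proof.
move=> z_ge1 z_le_u; have [N bN_gt] := exists_expr_not_le_u.
have [j [bj_le bj1_gt]] : exists j, b ^+ j ⪯ z /\ ~~ (b ^+ j.+1 ⪯ z).
  apply: (boundary_exists (P := fun j => b ^+ j ⪯ z) (N := N)); first by rewrite expr0.
  by apply: contra bN_gt => /natle_trans; apply.
have z_lt : z ⪯ b ^+ j.+1.
  by have /orP[le_z|//] := natle_total (b ^+ j.+1) z; rewrite le_z in bj1_gt.
have [bi bbi] := sf_inv L_sf (natle_neq0 b_ge1).
have bjbi : b ^+ j * bi ^+ j = 1 by rewrite -exprMn bbi expr1n.
pose z' := z * bi ^+ j.
have z_eq : z = z' * b ^+ j by rewrite -mulrA -exprMn (mulrC bi) bbi expr1n mulr1.
have z'_ge1 : 1 ⪯ z' by rewrite -bjbi natleM2r.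
have z'_le_b : z' ⪯ b.
  by have := natleM2r (bi ^+ j) z_lt; rewrite exprSr mulrAC bjbi mul1r.
have [z'1|z'_neq1] := eqVneq z' 1; first by exists j; rewrite z_eq z'1 mul1r.
have z'b : z' = b.
  by apply: natle_anti z'_le_b (b_least z'_ge1 (natle_trans z'_le_b b_le_u) z'_neq1).
by move: bj1_gt; rewrite z_eq z'b -exprS (natle_refl L_addxx).
Qed.

Lemma exists_root_u : exists2 n, (0 < n)%N & b ^+ n = upow 1.
Proof.
have [n un] := interval_expr upow1_ge1 (natle_refl L_addxx _).
by exists n => //; case: n un => // /eqP; rewrite expr0 (negbTE upow1_neq1).
Qed.

Lemma upow_expr_decomp y : y != 0 -> exists k (j : nat), y = upow k * b ^+ j.
Proof.
move=> /upow_interval[k [lo hi]].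
have [j zj] : exists j, y * upow (- k) = b ^+ j.
  apply: interval_expr.
    by have := natleM2l (upow (- k)) lo; rewrite upowD addNr upow0 mulrC.
  have := natleM2l (upow (- k)) hi; rewrite upowD mulrC.
  by have -> : - k + (k + 1) = 1 by lia.
by exists k, j; rewrite -zj mulrCA upowD subrr upow0 mulr1.
Qed.

Variable n : nat.
Hypotheses (n_gt0 : (0 < n)%N) (bn : b ^+ n = upow 1).

(* The candidate image of u^k: b^k, written as u^(k div n) b^(k mod n). *)
Definition bpow (k : int) : L := upow (k %/ n)%Z * b ^+ absz (k %% n)%Z.

Lemma upow1X (t : nat) : upow 1 ^+ t = upow t.
Proof.
elim: t => [|t IHt]; first by rewrite expr0 upow0.
by rewrite exprS IHt upowD -PoszD add1n.
Qed.

Lemma upow_exprE q (r : nat) : upow q * b ^+ r = bpow (q * n + r).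
Proof.
have n0 : n%:Z != 0 by rewrite eqz_nat -lt0n.
have r_mod : (0 <= (r %% n)%N%:Z < n%:Z) by rewrite lez_nat ltz_nat ltn_mod n_gt0.
rewrite {1}(divn_eq r n) exprD mulnC exprM bn upow1X mulrA upowD /bpow.
have -> : q * n + r = (q + (r %/ n)%N) * n + (r %% n)%N.
  by rewrite {1}(divn_eq r n) PoszD PoszM mulrDl addrA.
by rewrite divzMDl // divz_small ?addr0 // modzMDl modz_small.
Qed.

Lemma bpowD j k : bpow j * bpow k = bpow (j + k).
Proof.
have n0 : n%:Z != 0 by rewrite eqz_nat -lt0n.
rewrite {1 2}/bpow mulrACA upowD -exprD upow_exprE.
congr bpow; rewrite {3}(divz_eq j n) {3}(divz_eq k n) PoszD !gez0_abs ?modz_ge0 //.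
ring.
Qed.

Lemma bpow0 : bpow 0 = 1.
Proof. by have := upow_exprE 0 0; rewrite mul0r expr0 upow0 mulr1. Qed.

Lemma bpow1 : bpow 1 = b.
Proof. by have := upow_exprE 0 1; rewrite mul0r expr1 upow0 mul1r. Qed.

Lemma bpowMn k : bpow (n%:Z * k) = upow k.
Proof. by have := upow_exprE k 0; rewrite expr0 mulr1 addr0 mulrC. Qed.

Lemma bpow_neq0 k : bpow k != 0.
Proof.
apply/eqP => bk0; have := bpowD k (- k).
by rewrite bk0 mul0r subrr bpow0 => /eqP; rewrite eq_sym oner_eq0.
Qed.

Lemma bpow_ge1 k : 0 <= k -> 1 ⪯ bpow k.
Proof.
move=> k_ge0; rewrite /bpow -(mulr1 1) natleM ?(natle1_expr L_addxx) //.
by rewrite -upow0 natle_upow divz_ge0 // ltz_nat.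
Qed.

Lemma bpow_mono j k : j <= k -> bpow j ⪯ bpow k.
Proof.
move=> jk; rewrite -(subrK j k) addrC -bpowD -{1}[bpow j]mulr1.
by rewrite natleM2l // bpow_ge1 // subr_ge0.
Qed.

Lemma bpow_inj : injective bpow.
Proof.
suff bpow_lt j k : j < k -> bpow j != bpow k.
  move=> j k bjk; have [/bpow_lt|/bpow_lt|//] := ltrgtP j k; first by rewrite bjk eqxx.
  by rewrite bjk eqxx.
move=> jk; apply: contra_neq b_neq1 => bjk.
have bkj1 : bpow (k - j) = 1.
  by apply: (sf_mulIf L_sf (bpow_neq0 j)); rewrite mul1r bpowD subrK bjk.
apply: natle_anti b_ge1; rewrite -bkj1 -bpow1 bpow_mono //; lia.
Qed.

Definition frob_map (x : zmax) : L := if x is zmax_fin k then bpow k else 0.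

Lemma frob_map_is_nmod_morphism : nmod_morphism frob_map.
Proof.
split=> // -[|j] [|k] //=; rewrite ?add0r ?addr0 //.
have [jk|kj] := lerP j k; last rewrite addrC.
  by apply/esym/natleP; apply: bpow_mono.
by apply/esym/natleP; apply/bpow_mono/ltW.
Qed.

Lemma frob_map_is_monoid_morphism : monoid_morphism frob_map.
Proof. by split=> [|[|j] [|k]] //=; rewrite ?bpow0 ?mul0r ?mulr0 ?bpowD. Qed.

Lemma frob_map_inj : injective frob_map.
Proof.
move=> [|j] [|k] //= => [/esym/eqP|/eqP|/bpow_inj -> //].
  by rewrite (negbTE (bpow_neq0 k)).
by rewrite (negbTE (bpow_neq0 j)).
Qed.

Lemma frob_map_surj y : exists x, frob_map x == y.
Proof.
have [->|y0] := eqVneq y 0; first by exists zmax_ninf.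
have [k [j ->]] := upow_expr_decomp y0.
by exists (zmax_fin (k * n + j)); rewrite /= upow_exprE.
Qed.

Lemma frob_iso : exists phi : {rmorphism zmax -> L},
  bijective phi /\ forall x, phi (frob_zmax n x) = f x.
Proof.
pose phi : {rmorphism zmax -> L} := HB.pack frob_map
  (GRing.isNmodMorphism.Build _ _ _ frob_map_is_nmod_morphism)
  (GRing.isMonoidMorphism.Build _ _ _ frob_map_is_monoid_morphism).
exists phi; split; last by case=> [|k] /=; [rewrite raddf0 | rewrite bpowMn].
pose g y := xchoose (frob_map_surj y).
have gK : cancel g frob_map by move=> y; apply/eqP/(xchooseP (frob_map_surj y)).
by exists g => //; apply: inj_can_sym gK frob_map_inj.
Qed.

End FiniteExtension.

Theorem mainTheorem1 (L : comNzSemiRingType) (f : {rmorphism zmax -> L}) :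
  is_semifield L ->
  injective f ->
  fin_gen_semimodule f ->
  exists n : nat, (0 < n)%N /\
    exists phi : {rmorphism zmax -> L},
      bijective phi /\ (forall x : zmax, phi (frob_zmax n x) = f x).
Proof.
move=> L_sf f_inj [s s_gen].
have [c s_within] := exists_within_gen L_sf f_inj s_gen.
have [b [b_ge1 b_neq1 b_le_u b_least]] := exists_least_gt1 L_sf f_inj s_gen s_within.
have [n n_gt0 bn] := exists_root_u L_sf f_inj s_gen s_within b_ge1 b_neq1 b_le_u b_least.
exists n; split => //.
exact: (frob_iso L_sf f_inj s_gen s_within b_ge1 b_neq1 b_le_u b_least n_gt0 bn).
Qed.
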